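(* (i) The map $m\mapsto\dfrac{N(m,m)}{G(m)D(m,m)}$ is decreasing on $(0,\overline x]$. (ii) For every $m\in(0,\overline x]$, the map $x\mapsto\dfrac{N(x,m)}{G(x)D(x,m)}$ is decreasing on $[m,\eta(m)]$.
   Context: $\mathcal I=(\alpha,\infty)$, $-\infty\le\alpha<0$; $\mu,\sigma:\mathcal I\to\mathbb R$ Lipschitz with $\sigma>0$, $\alpha,+\infty$ natural boundaries of $dX_t=\mu(X_t)dt+\sigma(X_t)dB_t$; $r>0$; $U:[0,\infty)\to[0,\infty)$. Assumptions: (a) $\mu,\sigma$ are $C^1$ with Lipschitz derivatives, $\mu(0)>rU(0)$, $\sup_{x\ge0}\mu'(x)<r$; (b) $U$ is nondecreasing, concave, $C^2$ on $[0,\infty)$, and for some $u^*\ge0$: $U'\ge1$ on $[0,u^*]$, $U'=1$ on $[u^*,\infty)$, $\mu U'+\frac12\sigma^2U''-rU>0$ on $[0,u^* )$; (c) $\mu$ is twice differentiable with $\mu''\le0$ on $[0,\infty)$. Notation. $\overline x>0$ is the unique point with $\mu-rU>0$ on $[0,\overline x)$ and $\mu-rU<0$ on $(\overline x,\infty)$. $\psi,\phi$ are the positive increasing and decreasing solutions of $\frac12\sigma^2(x)u''+\mu(x)u'-ru=0$. $D(x,m)=\psi'(x)\phi(m)-\phi'(x)\psi(m)$, $N(x,m)=\phi(x)\psi(m)-\psi(x)\phi(m)+D(x,m)\frac{\mu(x)}{r}-D(x,x)U(m)$, $G(x)=1-\mu'(x)/r$. It is known that for every $m\in[0,\overline x]$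 the equation $N(x,m)=0$ has a unique solution $x=\eta(m)\ge0$, with $\eta(m)\ge m$, $N(x,m)>0$ for $x<\eta(m)$ and $N(x,m)<0$ for $x>\eta(m)$. *)

From Stdlib Require Import Reals.
From Coquelicot Require Import Coquelicot.
Open Scope R_scope.

Definition inI (alpha : Rbar) (x : R) : Prop := Rbar_lt alpha x.

Definition lipschitz_on (P : R -> Prop) (f : R -> R) : Prop :=
  exists L : R, forall x y, P x -> P y -> Rabs (f x - f y) <= L * Rabs (x - y).

(* Scale density (reference point 0, which lies in I since alpha < 0)
   and speed density of dX = mu(X) dt + sigma(X) dB. *)
Definition scale_dens (mu sigma : R -> R) (x : R) : R :=
  exp (- RInt (fun y => 2 * mu y / (sigma y) ^ 2) 0 x).
Definition speed_dens (mu sigma : R -> R) (x : R) : R :=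
  2 / ((sigma x) ^ 2 * scale_dens mu sigma x).

(* Feller's classification: a boundary b is natural iff
     Sigma(b) = int_c^b (int_c^y m) s(y) dy = +oo  and
     N(b)     = int_c^b (int_c^y s) m(y) dy = +oo.
   The integrands are nonnegative and continuous, so "= +oo" is
   expressed as unboundedness of the partial integrals. *)
Definition natural_right (mu sigma : R -> R) : Prop :=
  (forall B : R, exists t, 0 <= t /\
     B < RInt (fun y => RInt (speed_dens mu sigma) 0 y * scale_dens mu sigma y) 0 t) /\
  (forall B : R, exists t, 0 <= t /\
     B < RInt (fun y => RInt (scale_dens mu sigma) 0 y * speed_dens mu sigma y) 0 t).

Definition natural_left (alpha : Rbar) (mu sigma : R -> R) : Prop :=
  (forall B : R, exists a, Rbar_lt alpha a /\ a <= 0 /\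
     B < RInt (fun y => RInt (speed_dens mu sigma) y 0 * scale_dens mu sigma y) a 0) /\
  (forall B : R, exists a, Rbar_lt alpha a /\ a <= 0 /\
     B < RInt (fun y => RInt (scale_dens mu sigma) y 0 * speed_dens mu sigma y) a 0).

(* One-sided (within [0,+oo)) derivative and continuity, for functions
   defined on [0,+oo) only (the utility U). *)
Definition is_derive_nonneg (f f' : R -> R) : Prop :=
  forall x, 0 <= x ->
    filterlim (fun h => (f (x + h) - f x) / h)
      (within (fun h => h <> 0 /\ 0 <= x + h) (locally 0)) (locally (f' x)).
Definition continuous_nonneg (f : R -> R) : Prop :=
  forall x, 0 <= x ->
    filterlim f (within (fun y => 0 <= y) (locally x)) (locally (f x)).

Definition C2_nonneg (U U1 U2 : R -> R) : Prop :=
  is_derive_nonneg U U1 /\ is_derive_nonneg U1 U2 /\ continuous_nonneg U2.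

Definition solves_ode (alpha : Rbar) (mu sigma : R -> R) (r : R) (u : R -> R) : Prop :=
  forall x, inI alpha x ->
    ex_derive u x /\ ex_derive (Derive u) x /\
    / 2 * (sigma x) ^ 2 * Derive (Derive u) x + mu x * Derive u x - r * u x = 0.

Definition Dfun (psi phi : R -> R) (x m : R) : R :=
  Derive psi x * phi m - Derive phi x * psi m.
Definition Nfun (mu U : R -> R) (r : R) (psi phi : R -> R) (x m : R) : R :=
  phi x * psi m - psi x * phi m + Dfun psi phi x m * mu x / r
  - Dfun psi phi x x * U m.
Definition Gfun (mu : R -> R) (r x : R) : R := 1 - Derive mu x / r.

From Stdlib Require Import Reals Lra.
From Coquelicot Require Import Coquelicot.
Open Scope R_scope.

(* On the diagonal N(m,m) = D(m,m) (mu(m)/r - U(m)), so the ratio in (i) is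
   (mu/r - U)/G: a positive numerator, strictly decreasing because mu' < r <= r U',
   over a positive denominator, nondecreasing because mu'' <= 0.
   For (ii), the ODE satisfied by psi and phi gives
     d/dx N(x,m) = - G D - (2 mu / sigma^2) N,
     d/dx D(x,m) = - (2 / sigma^2) (r F + mu D),   F(x,m) = phi(x) psi(m) - psi(x) phi(m),
   so the derivative of N/(G D) has numerator (2 r / sigma^2) G N F + (mu''/r) N D - (G D)^2.
   On [m, eta(m)] we have N >= 0 and F <= 0 (psi increases, phi decreases), hence it is
   negative. *)

Lemma Derive_gt0_right (f : R -> R) x :
  ex_derive f x -> 0 < Derive f x -> exists y, x < y /\ f x < f y.
Proof.
intros Hf Hpos.
destruct (proj1 (is_derive_Reals f x _) (Derive_correct f x Hf) _ Hpos) as [d Hd].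
set (h := d / 2).
assert (Hh : 0 < h) by (unfold h; pose proof (cond_pos d); lra).
exists (x + h); split; [lra|].
assert (Hq : Rabs ((f (x + h) - f x) / h - Derive f x) < Derive f x).
{ apply Hd; [lra|]. rewrite Rabs_pos_eq by lra. unfold h; pose proof (cond_pos d); lra. }
apply Rabs_def2 in Hq.
assert (Hquot : 0 < (f (x + h) - f x) / h) by lra.
assert (0 < f (x + h) - f x); [|lra].
replace (f (x + h) - f x) with ((f (x + h) - f x) / h * h) by (field; lra).
now apply Rmult_lt_0_compat.
Qed.

Lemma Derive_le0_of_nonincreasing (f : R -> R) x :
  ex_derive f x -> (forall y, x < y -> f y <= f x) -> Derive f x <= 0.
Proof.
intros Hf Hdec. apply Rnot_lt_le. intros Hpos.
destruct (Derive_gt0_right f x Hf Hpos) as (y & Hxy & Hlt).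
specialize (Hdec y Hxy). lra.
Qed.

Lemma Derive_ge0_of_nondecreasing (f : R -> R) x :
  ex_derive f x -> (forall y, x < y -> f x <= f y) -> 0 <= Derive f x.
Proof.
intros Hf Hinc.
assert (Derive (fun y => - f y) x <= 0); [|rewrite Derive_opp in *; lra].
apply Derive_le0_of_nonincreasing; [apply (ex_derive_opp f x Hf)|].
intros y Hy. specialize (Hinc y Hy). lra.
Qed.

Lemma decreasing_of_derive_lt0 (f df : R -> R) a b :
  a < b -> (forall x, a <= x <= b -> is_derive f x (df x)) ->
  (forall x, a <= x <= b -> df x < 0) -> f b < f a.
Proof.
intros Hab Hf Hdf.
destruct (MVT_cor2 f df a b Hab) as (c & Hmvt & Hc).
{ intros c Hc. now apply is_derive_Reals, Hf. }
assert (df c * (b - a) < 0); [|lra].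
apply Rmult_neg_pos; [apply Hdf|]; lra.
Qed.

Lemma nondecreasing_of_derive_ge0 (f df : R -> R) a b :
  a <= b -> (forall x, a <= x <= b -> is_derive f x (df x)) ->
  (forall x, a <= x <= b -> 0 <= df x) -> f a <= f b.
Proof.
intros Hab Hf Hdf. destruct (Rle_lt_or_eq_dec a b Hab) as [Hlt | <-]; [|lra].
destruct (MVT_cor2 f df a b Hlt) as (c & Hmvt & Hc).
{ intros c Hc. now apply is_derive_Reals, Hf. }
assert (0 <= df c * (b - a)); [|lra].
apply Rmult_le_pos; [apply Hdf|]; lra.
Qed.

Lemma is_derive_of_nonneg (f f' : R -> R) x :
  is_derive_nonneg f f' -> 0 < x -> is_derive f x (f' x).
Proof.
intros Hf Hx. apply is_derive_Reals. intros eps Heps.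
destruct (Hf x (Rlt_le _ _ Hx) (ball (f' x) eps)) as [d Hd].
{ now exists (mkposreal eps Heps). }
assert (Hm : 0 < Rmin d x) by (pose proof (cond_pos d); now apply Rmin_glb_lt).
exists (mkposreal _ Hm). simpl. intros h Hh0 Hh.
pose proof (Rmin_l d x). pose proof (Rmin_r d x).
apply (Hd h).
- change (Rabs (h - 0) < d). rewrite Rminus_0_r. lra.
- apply Rabs_def2 in Hh. split; [exact Hh0|lra].
Qed.

Lemma Rdiv_lt_antitone a1 a2 b1 b2 :
  0 < a1 -> a2 < a1 -> 0 < b1 <= b2 -> a2 / b2 < a1 / b1.
Proof.
intros Ha1 Ha Hb. apply (Rmult_lt_reg_r (b1 * b2)); [nra|].
replace (a2 / b2 * (b1 * b2)) with (a2 * b1) by (field; lra).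
replace (a1 / b1 * (b1 * b2)) with (a1 * b2) by (field; lra).
nra.
Qed.

Definition ode_at (mu sigma : R -> R) (r : R) (u : R -> R) (x : R) : Prop :=
  ex_derive u x /\ ex_derive (Derive u) x /\
  / 2 * sigma x ^ 2 * Derive (Derive u) x + mu x * Derive u x - r * u x = 0.

Lemma ode_at_Derive2 mu sigma r u x : ode_at mu sigma r u x -> sigma x <> 0 ->
  Derive (Derive u) x = 2 / sigma x ^ 2 * (r * u x - mu x * Derive u x).
Proof. intros (_ & _ & E) Hs. field_simplify_eq; [lra|auto using pow_nonzero]. Qed.

(* [auto_derive] leaves [Derive (fun y => f y)]; fold it back to [Derive f]. *)
Ltac eta_Derive :=
  repeat match goal with |- context [Derive (fun y => ?f y)] => change (fun y => f y) with f end.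

Section Derivatives.

Variables (mu sigma U psi phi : R -> R) (r : R).
Hypothesis Hr : r <> 0.

Local Notation N := (Nfun mu U r psi phi).
Local Notation D := (Dfun psi phi).
Local Notation G := (Gfun mu r).
Local Notation F x m := (phi x * psi m - psi x * phi m).

Lemma Gfun_derive x :
  ex_derive (Derive mu) x -> is_derive G x (- Derive (Derive mu) x / r).
Proof. intros Hmu. unfold Gfun. auto_derive; [exact Hmu|]. eta_Derive. field. exact Hr. Qed.

Lemma Dfun_derive x m :
  ode_at mu sigma r psi x -> ode_at mu sigma r phi x -> sigma x <> 0 ->
  is_derive (fun y => D y m) x (- 2 / sigma x ^ 2 * (r * F x m + mu x * D x m)).
Proof.
intros Hpsi Hphi Hs. pose proof Hpsi as (_ & Hpsi1 & _). pose proof Hphi as (_ & Hphi1 & _).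
unfold Dfun. auto_derive; [auto|]. eta_Derive.
rewrite (ode_at_Derive2 _ _ _ psi), (ode_at_Derive2 _ _ _ phi) by eauto.
field. exact Hs.
Qed.

Lemma Nfun_derive x m :
  ode_at mu sigma r psi x -> ode_at mu sigma r phi x -> ex_derive mu x -> sigma x <> 0 ->
  is_derive (fun y => N y m) x (- G x * D x m - 2 * mu x / sigma x ^ 2 * N x m).
Proof.
intros Hpsi Hphi Hmu Hs. pose proof Hpsi as (Hpsi0 & Hpsi1 & _).
pose proof Hphi as (Hphi0 & Hphi1 & _).
unfold Nfun, Dfun, Gfun. auto_derive; [tauto|]. eta_Derive.
rewrite (ode_at_Derive2 _ _ _ psi), (ode_at_Derive2 _ _ _ phi) by eauto.
field. auto.
Qed.

Lemma ratio_derive x m :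
  ode_at mu sigma r psi x -> ode_at mu sigma r phi x -> sigma x <> 0 ->
  ex_derive mu x -> ex_derive (Derive mu) x -> G x <> 0 -> D x m <> 0 ->
  is_derive (fun y => N y m / (G y * D y m)) x
    ((2 * r / sigma x ^ 2 * G x * N x m * F x m + Derive (Derive mu) x / r * N x m * D x m
      - (G x * D x m) ^ 2) / (G x * D x m) ^ 2).
Proof.
intros Hpsi Hphi Hs Hmu Hmu1 HG HD.
assert (Hq := is_derive_div _ _ x _ _ (Nfun_derive x m Hpsi Hphi Hmu Hs)
  (is_derive_mult G (fun y => D y m) x _ _
     (Gfun_derive x Hmu1) (Dfun_derive x m Hpsi Hphi Hs) Rmult_comm)
  ltac:(now apply Rmult_integral_contrapositive_currified)).
refine (eq_rect _ (is_derive _ x) Hq _ _).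
change mult with Rmult; change plus with Rplus. simpl. field. auto.
Qed.

End Derivatives.

Lemma ratio_numerator_neg r s G D N F u2 :
  0 < r -> s <> 0 -> 0 < G -> 0 < D -> 0 <= N -> F <= 0 -> u2 <= 0 ->
  2 * r / s ^ 2 * G * N * F + u2 / r * N * D - (G * D) ^ 2 < 0.
Proof.
intros Hr Hs HG HD HN HF Hu2.
assert (Hk : 0 < 2 * r / s ^ 2) by (apply Rdiv_lt_0_compat; [lra|apply pow2_gt_0, Hs]).
assert (0 <= 2 * r / s ^ 2 * G * N) by (apply Rmult_le_pos; [apply Rmult_le_pos|]; lra).
assert (2 * r / s ^ 2 * G * N * F <= 0) by nra.
assert (0 <= - u2 / r) by (apply Rdiv_le_0_compat; lra).
assert (u2 / r * N * D <= 0) by (assert (0 <= N * D) by nra; nra).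
assert (0 < (G * D) ^ 2) by (apply pow_lt; nra).
lra.
Qed.

Section Ratio.

Variables (mu sigma U psi phi : R -> R) (r : R).
Hypothesis Hr : 0 < r.
Hypothesis Hsigma : forall x, 0 <= x -> 0 < sigma x.
Hypothesis Hmu1 : forall x, 0 <= x -> ex_derive mu x /\ Derive mu x < r.
Hypothesis Hmu2 : forall x, 0 <= x -> ex_derive (Derive mu) x /\ Derive (Derive mu) x <= 0.
Hypothesis Hpsi : forall x, 0 <= x -> ode_at mu sigma r psi x.
Hypothesis Hphi : forall x, 0 <= x -> ode_at mu sigma r phi x.
Hypothesis Hpsi_pos : forall x, 0 <= x -> 0 < psi x.
Hypothesis Hphi_pos : forall x, 0 <= x -> 0 < phi x.
Hypothesis Hpsi_inc : forall x y, 0 <= x -> x < y -> psi x < psi y.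
Hypothesis Hphi_dec : forall x y, 0 <= x -> x < y -> phi y < phi x.

Local Notation N := (Nfun mu U r psi phi).
Local Notation D := (Dfun psi phi).
Local Notation G := (Gfun mu r).

Lemma Derive_psi_ge0 x : 0 <= x -> 0 <= Derive psi x.
Proof.
intros Hx. apply Derive_ge0_of_nondecreasing; [apply (Hpsi x Hx)|].
intros y Hy. apply Rlt_le, Hpsi_inc; assumption.
Qed.

Lemma Derive_phi_lt0 x : 0 <= x -> Derive phi x < 0.
Proof.
assert (Hle : forall y, 0 <= y -> Derive phi y <= 0).
{ intros y Hy. apply Derive_le0_of_nonincreasing; [apply (Hphi y Hy)|].
  intros z Hz. apply Rlt_le, Hphi_dec; assumption. }
intros Hx. destruct (Rle_lt_or_eq_dec _ _ (Hle x Hx)) as [|Hzero]; [assumption|exfalso].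
(* At a critical point the ODE forces phi'' = 2 r phi / sigma^2 > 0,
   so phi' > 0 just to the right. *)
assert (Hconvex : 0 < Derive (Derive phi) x).
{ rewrite (ode_at_Derive2 mu sigma r) by (auto; apply Rgt_not_eq, Hsigma, Hx).
  rewrite Hzero, Rmult_0_r, Rminus_0_r.
  pose proof (Hsigma x Hx). pose proof (Hphi_pos x Hx).
  apply Rmult_lt_0_compat; [apply Rdiv_lt_0_compat; [lra|apply pow_lt; lra]|nra]. }
destruct (Derive_gt0_right (Derive phi) x ltac:(apply (Hphi x Hx)) Hconvex) as (y & Hxy & Hy).
pose proof (Hle y ltac:(lra)). lra.
Qed.

Lemma Dfun_pos x m : 0 <= x -> 0 <= m -> 0 < D x m.
Proof.
intros Hx Hm. unfold Dfun.
pose proof (Derive_psi_ge0 x Hx). pose proof (Derive_phi_lt0 x Hx).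
pose proof (Hpsi_pos m Hm). pose proof (Hphi_pos m Hm). nra.
Qed.

Lemma cross_nonpos x m : 0 <= m <= x -> phi x * psi m - psi x * phi m <= 0.
Proof.
intros Hmx. destruct (Rle_lt_or_eq_dec m x (proj2 Hmx)) as [Hlt | <-]; [|lra].
pose proof (Hpsi_inc m x (proj1 Hmx) Hlt). pose proof (Hphi_dec m x (proj1 Hmx) Hlt).
pose proof (Hpsi_pos m (proj1 Hmx)). pose proof (Hphi_pos x ltac:(lra)). nra.
Qed.

Lemma Gfun_pos x : 0 <= x -> 0 < G x.
Proof.
intros Hx. destruct (Hmu1 x Hx) as [_ Hlt]. unfold Gfun.
assert (Derive mu x / r < 1); [|lra].
apply (Rmult_lt_reg_r r); [exact Hr|]. unfold Rdiv. rewrite Rmult_assoc, Rinv_l; lra.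
Qed.

Lemma Gfun_nondecreasing a b : 0 <= a <= b -> G a <= G b.
Proof.
intros Hab. apply (nondecreasing_of_derive_ge0 _ (fun x => - Derive (Derive mu) x / r)); [lra| |].
- intros x Hx. apply Gfun_derive; [lra|]. apply Hmu2. lra.
- intros x Hx. destruct (Hmu2 x ltac:(lra)) as [_ Hneg].
  unfold Rdiv. apply Rmult_le_pos; [lra|]. apply Rlt_le, Rinv_0_lt_compat, Hr.
Qed.

Lemma ratio_decreasing m x1 x2 :
  0 <= m <= x1 -> x1 < x2 -> (forall x, x1 <= x <= x2 -> 0 <= N x m) ->
  N x2 m / (G x2 * D x2 m) < N x1 m / (G x1 * D x1 m).
Proof.
intros Hm H12 HN.
apply (decreasing_of_derive_lt0 (fun y => N y m / (G y * D y m)) (fun x =>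
  (2 * r / sigma x ^ 2 * G x * N x m * (phi x * psi m - psi x * phi m)
   + Derive (Derive mu) x / r * N x m * D x m - (G x * D x m) ^ 2) / (G x * D x m) ^ 2) x1 x2 H12).
- intros x Hx. assert (H0x : 0 <= x) by lra.
  apply ratio_derive; auto.
  + apply Rgt_not_eq, Hr.
  + apply Rgt_not_eq, Hsigma, H0x.
  + apply Hmu1, H0x.
  + apply Hmu2, H0x.
  + apply Rgt_not_eq, Gfun_pos, H0x.
  + apply Rgt_not_eq, Dfun_pos; lra.
- intros x Hx. assert (H0x : 0 <= x) by lra.
  pose proof (Gfun_pos x H0x). pose proof (Dfun_pos x m H0x ltac:(lra)).
  apply Rdiv_neg_pos; [|apply pow_lt; nra].
  apply ratio_numerator_neg; auto.
  + apply Rgt_not_eq, Hsigma, H0x.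
  + apply cross_nonpos; lra.
  + apply Hmu2, H0x.
Qed.

Lemma diag_ratio_eq m : 0 <= m -> N m m / (G m * D m m) = (mu m / r - U m) / G m.
Proof.
intros Hm. pose proof (Gfun_pos m Hm). pose proof (Dfun_pos m m Hm Hm).
unfold Nfun. field. lra.
Qed.

Section Utility.

Variable U1 : R -> R.
Hypothesis HU1 : forall x, 0 < x -> is_derive U x (U1 x).
Hypothesis HU1_ge1 : forall x, 0 < x -> 1 <= U1 x.

Lemma excess_decreasing m1 m2 : 0 < m1 < m2 -> mu m2 / r - U m2 < mu m1 / r - U m1.
Proof.
intros Hm.
apply (decreasing_of_derive_lt0 (fun y => mu y / r - U y) (fun x => Derive mu x / r - U1 x));
  [lra| |].
- intros x Hx. assert (H0x : 0 < x) by lra.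
  auto_derive; [split; [apply Hmu1; lra|split; [exists (U1 x); apply HU1, H0x|exact I]]|].
  eta_Derive. rewrite (is_derive_unique U x (U1 x) (HU1 x H0x)). field. lra.
- intros x Hx. pose proof (Gfun_pos x ltac:(lra)). pose proof (HU1_ge1 x ltac:(lra)).
  unfold Gfun in *. lra.
Qed.

Lemma diag_ratio_decreasing m1 m2 :
  0 < m1 < m2 -> 0 < mu m1 / r - U m1 ->
  N m2 m2 / (G m2 * D m2 m2) < N m1 m1 / (G m1 * D m1 m1).
Proof.
intros Hm Hpos. rewrite !diag_ratio_eq by lra.
apply Rdiv_lt_antitone; [exact Hpos|apply excess_decreasing, Hm|split].
- apply Gfun_pos. lra.
- apply Gfun_nondecreasing. lra.
Qed.

End Utility.

End Ratio.

Theorem lemma4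
  (alpha : Rbar) (mu sigma : R -> R) (r : R) (U : R -> R)
  (psi phi : R -> R) (xbar : R) (eta : R -> R)
  (* standing assumptions *)
  (Halpha : Rbar_lt alpha 0)
  (Hmu_lip : lipschitz_on (inI alpha) mu)
  (Hsig_lip : lipschitz_on (inI alpha) sigma)
  (Hsig_pos : forall x, inI alpha x -> 0 < sigma x)
  (Hnat_left : natural_left alpha mu sigma)
  (Hnat_right : natural_right mu sigma)
  (Hr : 0 < r)
  (HU_nonneg : forall x, 0 <= x -> 0 <= U x)
  (* (a) *)
  (Hmu_C1 : forall x, inI alpha x -> ex_derive mu x)
  (Hmu'_lip : lipschitz_on (inI alpha) (Derive mu))
  (Hsig_C1 : forall x, inI alpha x -> ex_derive sigma x)
  (Hsig'_lip : lipschitz_on (inI alpha) (Derive sigma))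
  (Hmu0 : mu 0 > r * U 0)
  (Hsup : exists c, c < r /\ forall x, 0 <= x -> Derive mu x <= c)
  (* (b) *)
  (HU_mono : forall x y, 0 <= x -> x <= y -> U x <= U y)
  (HU_conc : forall x y t, 0 <= x -> 0 <= y -> 0 <= t <= 1 ->
      t * U x + (1 - t) * U y <= U (t * x + (1 - t) * y))
  (HU_C2 : exists U1 U2 : R -> R, C2_nonneg U U1 U2 /\
      exists ustar, 0 <= ustar /\
        (forall x, 0 <= x <= ustar -> 1 <= U1 x) /\
        (forall x, ustar <= x -> U1 x = 1) /\
        (forall x, 0 <= x < ustar ->
           mu x * U1 x + / 2 * (sigma x) ^ 2 * U2 x - r * U x > 0))
  (* (c) *)
  (Hmu_C2 : forall x, 0 <= x ->
      ex_derive (Derive mu) x /\ Derive (Derive mu) x <= 0)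
  (* psi, phi: positive increasing / decreasing solutions of the ODE *)
  (Hpsi_ode : solves_ode alpha mu sigma r psi)
  (Hpsi_pos : forall x, inI alpha x -> 0 < psi x)
  (Hpsi_inc : forall x y, inI alpha x -> inI alpha y -> x < y -> psi x < psi y)
  (Hphi_ode : solves_ode alpha mu sigma r phi)
  (Hphi_pos : forall x, inI alpha x -> 0 < phi x)
  (Hphi_dec : forall x y, inI alpha x -> inI alpha y -> x < y -> phi y < phi x)
  (* xbar *)
  (Hxbar_pos : 0 < xbar)
  (Hxbar_l : forall x, 0 <= x < xbar -> mu x - r * U x > 0)
  (Hxbar_r : forall x, xbar < x -> mu x - r * U x < 0)
  (* eta (known facts from the context) *)
  (Heta : forall m, 0 <= m <= xbar ->
      0 <= eta m /\ m <= eta m /\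
      Nfun mu U r psi phi (eta m) m = 0 /\
      (forall x, 0 <= x -> Nfun mu U r psi phi x m = 0 -> x = eta m) /\
      (forall x, 0 <= x < eta m -> Nfun mu U r psi phi x m > 0) /\
      (forall x, eta m < x -> Nfun mu U r psi phi x m < 0)) :
  (* (i) *)
  (forall m1 m2, 0 < m1 -> m1 < m2 -> m2 <= xbar ->
     Nfun mu U r psi phi m2 m2 / (Gfun mu r m2 * Dfun psi phi m2 m2)
     < Nfun mu U r psi phi m1 m1 / (Gfun mu r m1 * Dfun psi phi m1 m1)) /\
  (* (ii) *)
  (forall m, 0 < m <= xbar ->
     forall x1 x2, m <= x1 -> x1 < x2 -> x2 <= eta m ->
     Nfun mu U r psi phi x2 m / (Gfun mu r x2 * Dfun psi phi x2 m)
     < Nfun mu U r psi phi x1 m / (Gfun mu r x1 * Dfun psi phi x1 m)).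
Proof.
destruct Hsup as (c & Hc & Hmu'_le).
destruct HU_C2 as (U1 & U2 & (HU1 & _) & ustar & _ & HU1_le & HU1_eq & _).
assert (HI : forall x, 0 <= x -> inI alpha x).
{ intros x Hx. unfold inI. destruct alpha; simpl in *; solve [lra|tauto]. }
assert (Hmu1 : forall x, 0 <= x -> ex_derive mu x /\ Derive mu x < r).
{ intros x Hx. split; [apply Hmu_C1, HI, Hx|]. specialize (Hmu'_le x Hx). lra. }
assert (HU1_ge1 : forall x, 0 < x -> 1 <= U1 x).
{ intros x Hx. destruct (Rle_lt_dec x ustar); [apply HU1_le; lra|rewrite HU1_eq; lra]. }
assert (Hpsi : forall x, 0 <= x -> ode_at mu sigma r psi x) by (intros; now apply Hpsi_ode, HI).
assert (Hphi : forall x, 0 <= x -> ode_at mu sigma r phi x) by (intros; now apply Hphi_ode, HI).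
assert (Hpsi_inc' : forall x y, 0 <= x -> x < y -> psi x < psi y).
{ intros x y Hx Hxy. apply Hpsi_inc; auto. apply HI. lra. }
assert (Hphi_dec' : forall x y, 0 <= x -> x < y -> phi y < phi x).
{ intros x y Hx Hxy. apply Hphi_dec; auto. apply HI. lra. }
split.
- intros m1 m2 H1 H12 H2.
  apply diag_ratio_decreasing with (sigma := sigma) (U1 := U1); auto.
  + intros x Hx. now apply is_derive_of_nonneg.
  + specialize (Hxbar_l m1 ltac:(lra)). apply (Rmult_lt_reg_l r); [exact Hr|].
    replace (r * (mu m1 / r - U m1)) with (mu m1 - r * U m1) by (field; lra). lra.
- intros m Hm x1 x2 Hx1 H12 Hx2.
  destruct (Heta m) as (_ & _ & Heta_root & _ & Heta_pos & _); [lra|].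
  apply ratio_decreasing with (sigma := sigma); auto; [lra|].
  intros x Hx. destruct (Rle_lt_or_eq_dec x (eta m)) as [Hlt | ->]; [lra| |].
  + apply Rlt_le, Heta_pos. lra.
  + rewrite Heta_root. lra.
Qed.
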